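(* Let $(A_n)_{n\ge 0}$ and $(B_n)_{n\ge 0}$ be sequences of real numbers and let $(x_n)_{n\ge 0}$ be a solution of $$x_{n+10}=\frac{x_n}{A_n+B_n\,x_nx_{n+2}x_{n+4}x_{n+6}x_{n+8}},\qquad n\ge 0,$$ with initial values $x_0,\dots,x_9$, such that all terms are well-defined and nonzero. For $j\in\{0,1\}$ put $F_j=\dfrac{1}{x_jx_{j+2}x_{j+4}x_{j+6}x_{j+8}}$. Then for every $k\in\{0,1,\dots,9\}$ and every $n\ge 0$, $$x_{10n+k}=x_k\prod_{s=0}^{n-1}\frac{F_{\tau(k)}\prod\limits_{t=0}^{m_s-1}A_{2t+\tau(k)}+\sum\limits_{i=0}^{m_s-1}\Big(B_{2i+\tau(k)}\prod\limits_{l=i+1}^{m_s-1}A_{2l+\tau(k)}\Big)}{F_{\tau(k)}\prod\limits_{t=0}^{m_s}A_{2t+\tau(k)}+\sum\limits_{i=0}^{m_s}\Big(B_{2i+\tau(k)}\prod\limits_{l=i+1}^{m_s}A_{2l+\tau(k)}\Big)},$$ where $m_s=5s+\lfloor k/2\rfloor$.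
   Context: $\tau(k)\in\{0,1\}$ denotes the remainder of $k$ upon division by $2$ and $\lfloor\cdot\rfloor$ is the floor function, so $k=2\lfloor k/2\rfloor+\tau(k)$. Empty products equal $1$, empty sums equal $0$; for $n=0$ the outer product is empty. This equation is the forward shift by $9$ of $x_{n+1}=x_{n-9}/(a_n+b_nx_{n-1}x_{n-3}x_{n-5}x_{n-7}x_{n-9})$ with $A_n=a_{n+9}$, $B_n=b_{n+9}$. *)

From mathcomp Require Import all_boot all_order all_algebra.
Set Implicit Arguments. Unset Strict Implicit. Unset Printing Implicit Defensive.
Import Order.TTheory GRing.Theory Num.Theory.
Local Open Scope ring_scope.

Definition tau (k : nat) : nat := (k %% 2)%N.

Definition Fj {R : fieldType} (x : nat -> R) (j : nat) : R :=
  (x j * x (j + 2)%N * x (j + 4)%N * x (j + 6)%N * x (j + 8)%N)^-1.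

Definition Gterm {R : fieldType} (A B : nat -> R) (F : R) (r M : nat) : R :=
  F * \prod_(0 <= t < M) A (2 * t + r)%N
  + \sum_(0 <= i < M) (B (2 * i + r)%N * \prod_(i.+1 <= l < M) A (2 * l + r)%N).

(* Put P n = x n x (n+2) x (n+4) x (n+6) x (n+8).  Multiplying the recurrence
   by P n shows that y n = 1 / P n satisfies the first-order linear recurrence
   y (n+2) = A n y n + B n along each parity class, whose explicit solution
   y (2M + r) is the expression Gterm with F = y r.  On the other hand
   x (n+10) / x n = P (n+2) / P n = y n / y (n+2), so x (10 n + k) / x k
   telescopes into a product of quotients of consecutive values of y. *)

From mathcomp Require Import all_boot all_order all_algebra.
From mathcomp Require Import ring zify.
Import Order.TTheory GRing.Theory Num.Theory.
Set Implicit Arguments. Unset Strict Implicit. Unset Printing Implicit Defensive.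
Local Open Scope ring_scope.

Lemma prod_telescope (R : pzRingType) (u c : nat -> R) (p : nat) :
    (forall m, u (m + p)%N = u m * c m) ->
  forall k n, u (p * n + k)%N = u k * \prod_(0 <= s < n) c (p * s + k)%N.
Proof.
move=> u_step k; elim=> [|n IHn]; first by rewrite big_geq // muln0 mulr1.
by rewrite big_nat_recr //= mulrA -IHn -u_step; congr u; lia.
Qed.

Section LinearRecurrence.

Variables (R : fieldType) (A B : nat -> R).

Lemma Gterm0 F r : Gterm A B F r 0 = F.
Proof. by rewrite /Gterm !big_geq // mulr1 addr0. Qed.

Lemma GtermS F r M :
  Gterm A B F r M.+1 = A (2 * M + r)%N * Gterm A B F r M + B (2 * M + r)%N.
Proof.
rewrite /Gterm big_nat_recr //= [\sum_(0 <= i < M.+1) _]big_nat_recr //=.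
rewrite [\prod_(M.+1 <= _ < M.+1) _]big_geq // mulr1.
have -> : \sum_(0 <= i < M) B (2 * i + r)%N * \prod_(i.+1 <= l < M.+1) A (2 * l + r)%N
    = A (2 * M + r)%N * \sum_(0 <= i < M) B (2 * i + r)%N * \prod_(i.+1 <= l < M) A (2 * l + r)%N.
  rewrite mulr_sumr; apply: eq_big_nat => i /andP [_ ltiM].
  by rewrite big_nat_recr //= mulrA mulrC.
ring.
Qed.

Lemma linear_rec_solution (y : nat -> R) :
    (forall n, y (n + 2)%N = A n * y n + B n) ->
  forall r M, y (2 * M + r)%N = Gterm A B (y r) r M.
Proof.
move=> y_rec r; elim=> [|M IHM]; first by rewrite Gterm0.
by rewrite GtermS -IHM -y_rec; congr (y _); lia.
Qed.

End LinearRecurrence.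

Section Recurrence.

Variables (R : fieldType) (A B x : nat -> R).

Definition window_prod (n : nat) : R :=
  x n * x (n + 2)%N * x (n + 4)%N * x (n + 6)%N * x (n + 8)%N.

Lemma window_prod_shift n :
  window_prod (n + 2) * x n = window_prod n * x (n + 10)%N.
Proof. by rewrite /window_prod -!addnA /=; ring. Qed.

Hypothesis x_neq0 : forall n, x n != 0.

Lemma window_prod_neq0 n : window_prod n != 0.
Proof. by rewrite /window_prod !mulf_neq0. Qed.

Lemma x_shift10 n :
  x (n + 10)%N = x n * ((window_prod n)^-1 / (window_prod (n + 2))^-1).
Proof.
apply: (mulfI (window_prod_neq0 n)); rewrite -window_prod_shift invrK.
by field; rewrite window_prod_neq0.
Qed.

Hypothesis x_rec : forall n,
  x (n + 10)%N = x n / (A n + B n * window_prod n).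

Lemma inv_window_prod_rec n :
  (window_prod (n + 2))^-1 = A n * (window_prod n)^-1 + B n.
Proof.
have -> : window_prod (n + 2) = window_prod n / (A n + B n * window_prod n).
  by apply: (mulIf (x_neq0 n)); rewrite window_prod_shift x_rec; ring.
by rewrite invfM invrK; field; rewrite window_prod_neq0.
Qed.

End Recurrence.

Theorem mainTheorem1 (R : realFieldType) (A B x : nat -> R)
  (hden : forall n : nat,
     A n + B n * (x n * x (n + 2)%N * x (n + 4)%N * x (n + 6)%N * x (n + 8)%N) != 0)
  (hrec : forall n : nat,
     x (n + 10)%N = x n / (A n + B n * (x n * x (n + 2)%N * x (n + 4)%N * x (n + 6)%N * x (n + 8)%N)))
  (hnz : forall n : nat, x n != 0) :
  forall (k n : nat), (k < 10)%N ->
    x (10 * n + k)%N =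
      x k * \prod_(0 <= s < n)
        (Gterm A B (Fj x (tau k)) (tau k) (5 * s + k %/ 2)%N
         / Gterm A B (Fj x (tau k)) (tau k) (5 * s + k %/ 2).+1).
Proof.
move=> k n _.
have y_sol := linear_rec_solution (inv_window_prod_rec hnz hrec).
rewrite (prod_telescope (x_shift10 hnz)); congr (_ * _).
apply: eq_big_nat => s _.
have -> : (10 * s + k = 2 * (5 * s + k %/ 2) + tau k)%N.
  by rewrite /tau {3}(divn_eq k 2); lia.
have -> : (2 * (5 * s + k %/ 2) + tau k + 2 = 2 * (5 * s + k %/ 2).+1 + tau k)%N
  by lia.
by rewrite !y_sol.
Qed.
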